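(* Let $N\ge2$, $q\in\mathbb{C}^\times$ generic, $s=(s_1,\dots,s_{N-1})$ generic, $x_a=2s_a-2s_{a-1}$ ($s_0=s_N=0$) and $w_{ab}=q^{x_a-x_b}$. Define $R(z,s)=\sum R_{i_1i_2}^{j_1j_2}E_{i_1j_1}\otimes E_{i_2j_2}\in\mathrm{End}(\mathbb{C}^N)^{\otimes2}$ whose only non-vanishing entries are ($1\le a,b\le N$, $a\neq b$ in the last two) $$R_{aa}^{aa}=\rho(z),\quad R_{ab}^{ab}=\rho(z)\begin{cases}\dfrac{q(1-z)}{1-q^2z}& b>a,\\[2mm] \dfrac{q(1-z)}{1-q^2z}\,\dfrac{(1-w_{ab}q^2)(1-w_{ab}q^{-2})}{(1-w_{ab})^2}& b<a,\end{cases}\quad R_{ab}^{ba}=\rho(z)\frac{(1-q^2)(1-w_{ab}z)}{(1-q^2z)(1-w_{ab})},$$ with $\rho(z)=q^{-\frac{N-1}{N}}\dfrac{(q^2z;q^{2N})_\infty(q^{2N-2}z;q^{2N})_\infty}{(z;q^{2N})_\infty(q^{2N}z;q^{2N})_\infty}$. Then $R$ (the evaluated $R$-matrix of the dynamical twist $\mathcal{U}_{q,\lambda}(\widehat{sl}_N)$ of $\mathcal{U}_q(\widehat{sl}_N)$) satisfies the dynamical Yang--Baxter equation with multiplicative spectral parameter $$R_{12}(z,s+h^{(3)})\,R_{13}(zz',s)\,R_{23}(z',s+h^{(1)})=R_{23}(z',s)\,R_{13}(zz',s+h^{(2)})\,R_{12}(z,s).$$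
   Context: $E_{ab}$ is the $N\times N$ elementary matrix; $(x;p)_\infty=\prod_{n\ge0}(1-xp^n)$. Shift notation: with $h_j=E_{jj}-E_{j+1,j+1}$, $(d_{ij})$ the inverse Cartan matrix of $sl_N$ and $h^\vee_i=\sum_j d_{ij}h_j$, the expression $R_{12}(z,s+h^{(3)})$ means $R_{12}(z,s)$ with each $s_i$ replaced by $s_i+h^\vee_i$ acting (diagonally) in the third tensor factor of $(\mathbb{C}^N)^{\otimes 3}$; similarly for $h^{(1)},h^{(2)}$. *)

From HB Require Import structures.
From mathcomp Require Import all_boot all_order all_algebra.
From mathcomp Require Import complex.
From mathcomp Require Import all_classical all_reals all_analysis.

Set Implicit Arguments.
Unset Strict Implicit.
Unset Printing Implicit Defensive.

Import Order.TTheory GRing.Theory Num.Theory.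
Import numFieldNormedType.Exports.
Local Open Scope ring_scope.
Local Open Scope complex_scope.

Section Defs.
Variable R : realType.
Local Notation C := (R[i]).

Definition cexp (z : C) : C :=
  (expR (@complex.Re R z))%:C * ((cos (@complex.Im R z))%:C + 'i * (sin (@complex.Im R z))%:C).

(* complex power q^x with q = cexp tau (tau a fixed logarithm of q) *)
Definition cpow (tau x : C) : C := cexp (tau * x).

Definition cconv (u : nat -> C) (L : C) : Prop :=
  forall e : R, 0 < e -> exists M : nat, forall n : nat, (M <= n)%N -> `|u n - L| < e%:C.

Definition qpoch (x p : C) : C :=
  xget 0 [set L | cconv (fun n : nat => \prod_(k < n) (1 - x * p ^+ k)) L].

Definition rho (N : nat) (tau z : C) : C :=
  let q := cexp tau in
  let p := q ^+ (2 * N) in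
  cpow tau (- ((N - 1)%:R / N%:R)) *
  (qpoch (q ^+ 2 * z) p * qpoch (q ^+ (2 * N - 2) * z) p)
  / (qpoch z p * qpoch (p * z) p).

(* s = (s_1,...,s_{N-1}) is given as s : 'I_(N-1) -> C, where s i = s_{i+1};
   extended by s_0 = s_N = 0 (and 0 outside 1..N-1). *)
Definition sext (N : nat) (s : 'I_(N - 1) -> C) (k : nat) : C :=
  if (0 < k)%N then
    (if insub k.-1 is Some i then s i else 0)
  else 0.

(* x_a = 2 s_a - 2 s_{a-1}, for a = 1..N (a : 'I_N stands for a+1) *)
Definition xcoord (N : nat) (s : 'I_(N - 1) -> C) (a : 'I_N) : C :=
  2 * sext s a.+1 - 2 * sext s a.

Definition wdyn (N : nat) (tau : C) (s : 'I_(N - 1) -> C) (a b : 'I_N) : C :=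
  cpow tau (xcoord s a - xcoord s b).

Definition Rent (N : nat) (tau z : C) (s : 'I_(N - 1) -> C)
    (i1 i2 j1 j2 : 'I_N) : C :=
  let q := cexp tau in
  let w := wdyn tau s i1 i2 in
  if i1 == i2 then
    (if (j1 == i1) && (j2 == i1) then rho N tau z else 0)
  else if (j1 == i1) && (j2 == i2) then
    (if (i1 < i2)%N then rho N tau z * (q * (1 - z) / (1 - q ^+ 2 * z))
     else rho N tau z * (q * (1 - z) / (1 - q ^+ 2 * z)) *
          ((1 - w * q ^+ 2) * (1 - w * q ^- 2) / (1 - w) ^+ 2))
  else if (j1 == i2) && (j2 == i1) then
    rho N tau z * ((1 - q ^+ 2) * (1 - w * z) / ((1 - q ^+ 2 * z) * (1 - w)))
  else 0.

Definition cartan_inv (N i j : nat) : C :=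
  (minn i j)%:R - (i * j)%:R / N%:R.

(* eigenvalue of h_j = E_{jj} - E_{j+1,j+1} on the basis vector e_c *)
Definition hval (j c : nat) : C := (j == c)%:R - (j.+1 == c)%:R.

(* eigenvalue of h^vee_i = sum_j d_{ij} h_j on e_c *)
Definition hvee (N i c : nat) : C :=
  \sum_(1 <= j < N) cartan_inv N i j * hval j c.

(* s + h^vee evaluated on the basis vector e_{c+1}: s_i |-> s_i + <h^vee_i, e_c> *)
Definition sshift (N : nat) (s : 'I_(N - 1) -> C) (c : 'I_N) : 'I_(N - 1) -> C :=
  fun i => s i + hvee N i.+1 c.+1.

(* operators on (C^N)^{(x)3}, as matrices indexed by triples of basis indices *)
Definition idx3 (N : nat) := ('I_N * 'I_N * 'I_N)%type.
Definition op3 (N : nat) := idx3 N -> idx3 N -> C.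

Definition mul3 (N : nat) (A B : op3 N) : op3 N :=
  fun I J => \sum_(K : idx3 N) A I K * B K J.

(* R_{12}(z, s + h^{(3)}) (shifted) or R_{12}(z, s) (unshifted) *)
Definition R12 (N : nat) (tau z : C) (s : 'I_(N - 1) -> C) (sh : bool) : op3 N :=
  fun I J =>
    let: (i1, i2, i3) := I in let: (j1, j2, j3) := J in
    (i3 == j3)%:R * Rent tau z (if sh then sshift s i3 else s) i1 i2 j1 j2.

(* R_{13}(z, s + h^{(2)}) (shifted) or R_{13}(z, s) *)
Definition R13 (N : nat) (tau z : C) (s : 'I_(N - 1) -> C) (sh : bool) : op3 N :=
  fun I J =>
    let: (i1, i2, i3) := I in let: (j1, j2, j3) := J in
    (i2 == j2)%:R * Rent tau z (if sh then sshift s i2 else s) i1 i3 j1 j3.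

(* R_{23}(z, s + h^{(1)}) (shifted) or R_{23}(z, s) *)
Definition R23 (N : nat) (tau z : C) (s : 'I_(N - 1) -> C) (sh : bool) : op3 N :=
  fun I J =>
    let: (i1, i2, i3) := I in let: (j1, j2, j3) := J in
    (i1 == j1)%:R * Rent tau z (if sh then sshift s i1 else s) i2 i3 j2 j3.

End Defs.

From HB Require Import structures.
From mathcomp Require Import all_boot all_order all_algebra.
From mathcomp Require Import complex.
From mathcomp Require Import all_classical all_reals all_analysis.
From mathcomp Require Import ring zify.

Set Implicit Arguments.
Unset Strict Implicit.
Unset Printing Implicit Defensive.

Import Order.TTheory GRing.Theory Num.Theory.
Local Open Scope ring_scope.
Local Open Scope complex_scope.

(* Each R-matrix sends e_a (x) e_b, in the two factors it acts on, to a combination of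
   e_a (x) e_b (the diagonal part) and e_b (x) e_a (the swap part), so an entry of either
   side of the dynamical Yang-Baxter equation is a sum over the eight choices of diagonal or
   swap part for the three factors.  The dynamical shift by h^vee_c changes every x_a by
   2[c = a] - 2/N, hence multiplies w_ab = q^(x_a) / q^(x_b) by q^(2[c = a] - 2[c = b]).
   Each entry is therefore rho(z) rho(zz') rho(z') times a rational function of q, z, z' and
   the q^(x_a), determined by the relative order of the three indices; for each of the 13
   weak orders and each target permutation the two rational functions coincide. *)

Section ComplexExponential.
Variable R : realType.
Implicit Types a b : R[i].

Lemma cexpD a b : cexp (a + b) = cexp a * cexp b.
Proof.
case: a b => [a1 a2] [b1 b2]; rewrite /cexp /= expRD cosD sinD.
by apply/eqP; rewrite eq_complex /=; apply/andP; split; apply/eqP; ring.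
Qed.

Lemma cexp0 : cexp 0 = 1 :> R[i].
Proof.
by apply/eqP; rewrite /cexp eq_complex /= expR0 cos0 sin0; apply/andP; split; apply/eqP; ring.
Qed.

Lemma cexp_neq0 a : cexp a != 0.
Proof.
apply/eqP => cexpa0; have := @cexp0.
by rewrite -(subrr a) cexpD cexpa0 mul0r => /eqP; rewrite eq_sym oner_eq0.
Qed.

Lemma cexpN a : cexp (- a) = (cexp a)^-1.
Proof. by apply: (mulIf (cexp_neq0 a)); rewrite -cexpD addNr cexp0 mulVf ?cexp_neq0. Qed.

Lemma cexp_mulrn a (n : nat) : cexp (a *+ n) = cexp a ^+ n.
Proof. by elim: n => [|n IHn]; rewrite ?mulr0n ?cexp0 // mulrS cexpD IHn exprS. Qed.

End ComplexExponential.

Lemma sum_nat_indicator (V : pzSemiRingType) (F : nat -> V) (m n k : nat) :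
  \sum_(m <= j < n) F j * (j == k)%:R = if (m <= k < n)%N then F k else 0.
Proof. by under eq_bigr do rewrite mulr_natr mulrb; rewrite -big_mkcond big_nat1_eq. Qed.

Section DynamicalShift.
Variables (R : realType) (N : nat).
Local Notation C := R[i].

Lemma cartan_inv0 (i : nat) : cartan_inv R N i 0 = 0.
Proof. by rewrite /cartan_inv minn0 muln0 mul0r subrr. Qed.

Lemma cartan_invN (i : nat) : (i <= N)%N -> cartan_inv R N i N = 0.
Proof.
move=> iN; rewrite /cartan_inv (minn_idPl iN) natrM.
have [N0|N_gt0] := posnP N; last by rewrite mulfK ?subrr // pnatr_eq0 -lt0n.
by move: iN; rewrite N0 leqn0 => /eqP->; rewrite !mul0r subrr.
Qed.

Lemma cartan_invS (i c : nat) :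
  cartan_inv R N i c.+1 - cartan_inv R N i c = (c < i)%:R - i%:R / N%:R.
Proof.
rewrite /cartan_inv mulnS natrD mulrDl.
have -> : (minn i c.+1)%:R = (minn i c)%:R + (c < i)%:R :> C.
  by rewrite -natrD; congr _%:R; case: (ltnP c i) => ci; lia.
ring.
Qed.

Lemma hveeS (i c : nat) : (0 < i < N)%N -> (c < N)%N ->
  hvee R N i c.+1 = (c < i)%:R - i%:R / N%:R.
Proof.
move=> /andP[i_gt0 i_ltN] cN.
(* The sum telescopes to d_(i, c+1) - d_(i, c); the boundary values d_(i, 0) and d_(i, N)
   of the formula for d vanish. *)
rewrite /hvee; under eq_bigr do rewrite /hval eqSS mulrBr.
rewrite sumrB !sum_nat_indicator -cartan_invS.
congr (_ - _).
  case: ifP => [//|]; rewrite ltnS /= => /negbT; rewrite -ltnNge => NcS.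
  have -> : c.+1 = N by lia.
  by rewrite cartan_invN // ltnW.
by case: c cN => [|c] cN; rewrite ?cartan_inv0 //= cN.
Qed.

Variable s : 'I_(N - 1) -> C.

Lemma sext_sshift (c : 'I_N) (k : nat) : (k <= N)%N ->
  sext (sshift s c) k = sext s k + ((c < k)%:R - k%:R / N%:R).
Proof.
rewrite /sext; case: k => [|k] kN /=; first by rewrite mul0r subr0 addr0.
case: insubP => [i /= kN' ik|/= /negbTE kN']; last first.
  have -> : k.+1 = N by lia.
  by rewrite ltn_ord divff ?subrr ?addr0 // pnatr_eq0 -lt0n (leq_ltn_trans _ (ltn_ord c)).
by rewrite /sshift ik hveeS ?ltn_ord //; lia.
Qed.

Lemma xcoord_sshift (c a : 'I_N) :
  xcoord (sshift s c) a = xcoord s a + 2 * (c == a)%:R - 2 / N%:R.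
Proof.
rewrite /xcoord (sext_sshift c (ltn_ord a)) (sext_sshift c (ltnW (ltn_ord a))).
have -> : (c < a.+1)%:R = (c < a)%:R + (c == a)%:R :> C.
  by rewrite -natrD ltnS leq_eqVlt -val_eqE; case: ltngtP.
ring.
Qed.

End DynamicalShift.

Section Weights.
Variables (R : realType) (N : nat) (tau : R[i]) (s : 'I_(N - 1) -> R[i]).
Local Notation q := (cexp tau).

Definition qx (a : 'I_N) := cexp (tau * xcoord s a).

Lemma qx_neq0 a : qx a != 0. Proof. exact: cexp_neq0. Qed.

Lemma wdynE a b : wdyn tau s a b = qx a / qx b.
Proof. by rewrite /wdyn /cpow mulrBr cexpD cexpN. Qed.

Lemma wdyn_sshiftE c a b :
  wdyn tau (sshift s c) a b = qx a * q ^+ (2 * (c == a)) / (qx b * q ^+ (2 * (c == b))).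
Proof.
rewrite /wdyn /cpow !xcoord_sshift.
have -> : tau * (xcoord s a + 2 * (c == a)%:R - 2 / N%:R
                 - (xcoord s b + 2 * (c == b)%:R - 2 / N%:R))
    = tau * xcoord s a + tau *+ (2 * (c == a)) - (tau * xcoord s b + tau *+ (2 * (c == b))).
  by rewrite -!(mulr_natr tau) !natrM; ring.
by rewrite cexpD cexpN !cexpD !cexp_mulrn.
Qed.

Hypothesis generic_s : forall a b : 'I_N, a != b ->
  wdyn tau s a b != 1 /\ (forall c : 'I_N, wdyn tau (sshift s c) a b != 1).

Lemma qx_sub_neq0 a b : a != b -> qx a - qx b != 0.
Proof.
move=> ab; have [+ _] := generic_s ab; rewrite wdynE; apply: contra.
by rewrite subr_eq0 => /eqP ->; rewrite divff ?qx_neq0.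
Qed.

Lemma qx_q2_sub_neq0 a b : a != b -> qx a * q ^+ 2 - qx b != 0.
Proof.
move=> ab; have [_ /(_ a)] := generic_s ab.
rewrite wdyn_sshiftE eqxx (negbTE ab) muln0 expr0 mulr1; apply: contra.
by rewrite subr_eq0 => /eqP ->; rewrite divff ?qx_neq0.
Qed.

Lemma qx_sub_q2_neq0 a b : a != b -> qx a - qx b * q ^+ 2 != 0.
Proof.
move=> ab; have [_ /(_ b)] := generic_s ab.
rewrite wdyn_sshiftE eqxx (eq_sym b a) (negbTE ab) muln0 expr0 mulr1; apply: contra.
by rewrite subr_eq0 => /eqP ->; rewrite divff // mulf_neq0 ?qx_neq0 ?expf_neq0 ?cexp_neq0.
Qed.

End Weights.

Lemma ord_ltn_rules (N : nat) (a b : 'I_N) : (a < b)%N ->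
  ((a == b) = false) * ((b == a) = false) * ((a < b)%N = true) * ((b < a)%N = false).
Proof.
by move=> ab; rewrite ab; do !split; apply/negbTE; rewrite -?val_eqE /=; lia.
Qed.

Section ThreeFoldProducts.
Variables (R : realType) (N : nat).
Local Notation C := R[i].
Implicit Types (A B D : op3 R N) (I J K : idx3 N).

Lemma mul3A A B D I J : mul3 (mul3 A B) D I J = mul3 A (mul3 B D) I J.
Proof.
rewrite /mul3; under eq_bigr do rewrite big_distrl.
rewrite exchange_big; apply: eq_bigr => L _; rewrite big_distrr.
by apply: eq_bigr => K _; apply/esym/mulrA.
Qed.

Lemma mul3_row2 A B I J u v (a b : C) :
  (forall K, A I K = (if K == u then a else 0) + (if K == v then b else 0)) ->
  mul3 A B I J = a * B u J + b * B v J.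
Proof.
move=> rowA; rewrite /mul3.
under eq_bigr => K _ do rewrite rowA mulrDl !(fun_if (fun x => x * B K J)) !mul0r.
by rewrite big_split -!big_mkcond !big_pred1_eq.
Qed.

End ThreeFoldProducts.

(* Locked, so that rewriting in the expanded products never unfolds [rho] or [wdyn]. *)
HB.lock Definition Rdiag (R : realType) (N : nat) (tau z : R[i]) (t : 'I_(N - 1) -> R[i])
    (a b : 'I_N) : R[i] :=
  let q := cexp tau in let w := wdyn tau t a b in
  rho N tau z * (if a == b then 1 else q * (1 - z) / (1 - q ^+ 2 * z) *
    (if (a < b)%N then 1 else (1 - w * q ^+ 2) * (1 - w * q ^- 2) / (1 - w) ^+ 2)).

HB.lock Definition Rswap (R : realType) (N : nat) (tau z : R[i]) (t : 'I_(N - 1) -> R[i])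
    (a b : 'I_N) : R[i] :=
  let q := cexp tau in let w := wdyn tau t a b in
  if a == b then 0 else rho N tau z * ((1 - q ^+ 2) * (1 - w * z) / ((1 - q ^+ 2 * z) * (1 - w))).

Section RMatrixEntries.
Variables (R : realType) (N : nat) (tau : R[i]).
Local Notation C := R[i].
Implicit Types (z : C) (t : 'I_(N - 1) -> C).

Lemma RentE z t (a b c d : 'I_N) : Rent tau z t a b c d =
  (if (c == a) && (d == b) then Rdiag tau z t a b else 0) +
  (if (c == b) && (d == a) then Rswap tau z t a b else 0).
Proof.
rewrite Rdiag.unlock Rswap.unlock /=; have [<-|ab] := eqVneq a b.
  by rewrite /Rent eqxx if_same addr0 mulr1.
have [/andP[/eqP-> /eqP->]|same] := boolP ((c == a) && (d == b)).
  by rewrite /Rent (negbTE ab) !eqxx addr0; case: (a < b)%N; rewrite ?mulr1 ?mulrA.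
have [/andP[/eqP-> /eqP->]|swap] := boolP ((c == b) && (d == a)).
  by rewrite /Rent (negbTE ab) eq_sym (negbTE ab) !eqxx add0r.
by rewrite addr0 /Rent (negbTE ab) (negbTE same) (negbTE swap).
Qed.

Lemma R12E z t sh (i1 i2 i3 : 'I_N) K :
  R12 tau z t sh (i1, i2, i3) K =
    (if K == (i1, i2, i3) then Rdiag tau z (if sh then sshift t i3 else t) i1 i2 else 0) +
    (if K == (i2, i1, i3) then Rswap tau z (if sh then sshift t i3 else t) i1 i2 else 0).
Proof.
case: K => [[k1 k2] k3]; rewrite /R12 RentE !xpair_eqE (eq_sym i3).
by case: (k3 == i3); rewrite ?mul1r ?mul0r ?andbT ?andbF ?addr0.
Qed.

Lemma R13E z t sh (i1 i2 i3 : 'I_N) K :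
  R13 tau z t sh (i1, i2, i3) K =
    (if K == (i1, i2, i3) then Rdiag tau z (if sh then sshift t i2 else t) i1 i3 else 0) +
    (if K == (i3, i2, i1) then Rswap tau z (if sh then sshift t i2 else t) i1 i3 else 0).
Proof.
case: K => [[k1 k2] k3]; rewrite /R13 RentE !xpair_eqE (eq_sym i2).
by case: (k2 == i2); rewrite ?mul1r ?mul0r ?andbT ?andbF ?addr0 // !andbA.
Qed.

Lemma R23E z t sh (i1 i2 i3 : 'I_N) K :
  R23 tau z t sh (i1, i2, i3) K =
    (if K == (i1, i2, i3) then Rdiag tau z (if sh then sshift t i1 else t) i2 i3 else 0) +
    (if K == (i1, i3, i2) then Rswap tau z (if sh then sshift t i1 else t) i2 i3 else 0).
Proof.
case: K => [[k1 k2] k3]; rewrite /R23 RentE !xpair_eqE (eq_sym i1).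
by case: (k1 == i1); rewrite ?mul1r ?mul0r ?andbT ?andbF ?addr0 // !andbA.
Qed.

Lemma mul3_R12l z t sh B (i1 i2 i3 : 'I_N) J :
  mul3 (R12 tau z t sh) B (i1, i2, i3) J =
    Rdiag tau z (if sh then sshift t i3 else t) i1 i2 * B (i1, i2, i3) J +
    Rswap tau z (if sh then sshift t i3 else t) i1 i2 * B (i2, i1, i3) J.
Proof. exact/mul3_row2/R12E. Qed.

Lemma mul3_R13l z t sh B (i1 i2 i3 : 'I_N) J :
  mul3 (R13 tau z t sh) B (i1, i2, i3) J =
    Rdiag tau z (if sh then sshift t i2 else t) i1 i3 * B (i1, i2, i3) J +
    Rswap tau z (if sh then sshift t i2 else t) i1 i3 * B (i3, i2, i1) J.
Proof. exact/mul3_row2/R13E. Qed.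

Lemma mul3_R23l z t sh B (i1 i2 i3 : 'I_N) J :
  mul3 (R23 tau z t sh) B (i1, i2, i3) J =
    Rdiag tau z (if sh then sshift t i1 else t) i2 i3 * B (i1, i2, i3) J +
    Rswap tau z (if sh then sshift t i1 else t) i2 i3 * B (i1, i3, i2) J.
Proof. exact/mul3_row2/R23E. Qed.

End RMatrixEntries.

Ltac rewrite_order := repeat match goal with h : is_true (_ < _)%N |- _ =>
  rewrite ?(ord_ltn_rules h); revert h end; intros.

(* Side conditions of [field], matched syntactically: unification against the unfolded
   [qx] or [cexp] is prohibitively slow. *)
Ltac solve_nonzero := match goal with
  | |- is_true (qx _ _ _ != 0) => exact: qx_neq0
  | |- is_true (cexp _ != 0) => exact: cexp_neq0
  | |- is_true (qx _ _ _ - qx _ _ _ != 0) => by apply: qx_sub_neq0 => //; rewrite_order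
  | |- is_true (qx _ _ _ * _ - qx _ _ _ != 0) => by apply: qx_q2_sub_neq0 => //; rewrite_order
  | |- is_true (qx _ _ _ - qx _ _ _ * _ != 0) => by apply: qx_sub_q2_neq0 => //; rewrite_order
  | _ => done
  end.

Section DynamicalYangBaxter.
Variables (R : realType) (N : nat) (tau : R[i]) (s : 'I_(N - 1) -> R[i]) (z z' : R[i]).
Local Notation q := (cexp tau).
Hypothesis generic_s : forall a b : 'I_N, a != b ->
  wdyn tau s a b != 1 /\ (forall c : 'I_N, wdyn tau (sshift s c) a b != 1).
Hypotheses (qz : 1 - q ^+ 2 * z != 0) (qz' : 1 - q ^+ 2 * z' != 0)
  (qzz' : 1 - q ^+ 2 * (z * z') != 0).

Lemma dynamical_ybe_entry I J :
  mul3 (mul3 (R12 tau z s true) (R13 tau (z * z') s false)) (R23 tau z' s true) I J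
  = mul3 (mul3 (R23 tau z' s false) (R13 tau (z * z') s true)) (R12 tau z s false) I J.
Proof.
case: I => [[i1 i2] i3].
case: (ltngtP i1 i2) => [?|?|?]; case: (ltngtP i1 i3) => [?|?|?];
  case: (ltngtP i2 i3) => [?|?|?]; try by exfalso; lia.
all: rewrite !mul3A mul3_R12l mul3_R23l !mul3_R13l !R12E !R23E.
(* Every path ends at a permutation of (i1, i2, i3). *)
all: have [?|J1] := eqVneq J (i1, i2, i3); last have [?|J2] := eqVneq J (i1, i3, i2);
  last have [?|J3] := eqVneq J (i2, i1, i3); last have [?|J4] := eqVneq J (i2, i3, i1);
  last have [?|J5] := eqVneq J (i3, i1, i2); last have [?|J6] := eqVneq J (i3, i2, i1);
  last by rewrite !(addr0, mulr0).
all: repeat match goal with h : nat_of_ord _ = nat_of_ord _ |- _ => move/val_inj: h => ? end.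
(* Discard the branches where J was assumed to differ from a permutation it now equals. *)
all: subst; try by match goal with h : is_true (?x != ?x) |- _ => rewrite eqxx in h end.
all: rewrite ?xpair_eqE; rewrite_order; rewrite ?eqxx /= ?(addr0, add0r, mulr0).
all: rewrite ?Rdiag.unlock ?Rswap.unlock /=; rewrite_order; rewrite ?eqxx ?ltnn /=.
all: rewrite ?wdyn_sshiftE ?wdynE; rewrite_order; rewrite ?eqxx ?muln0 ?muln1 ?expr0.
all: field; repeat (apply/andP; split); solve_nonzero.
Qed.

End DynamicalYangBaxter.

Theorem mainTheorem3 (R : realType) (N : nat) (tau : R[i])
    (s : 'I_(N - 1) -> R[i]) (z z' : R[i]) :
  (2 <= N)%N ->
  (* q = cexp tau; convergence of the infinite products in rho *)
  `|cexp tau| < 1 ->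
  (* genericity of s (also after every dynamical shift) *)
  (forall a b : 'I_N, a != b ->
     wdyn tau s a b != 1 /\ (forall c : 'I_N, wdyn tau (sshift s c) a b != 1)) ->
  (* genericity of the spectral parameters *)
  (forall y : R[i], y \in [:: z; z'; z * z'] ->
     [/\ 1 - cexp tau ^+ 2 * y != 0,
         qpoch y (cexp tau ^+ (2 * N)) != 0 &
         qpoch (cexp tau ^+ (2 * N) * y) (cexp tau ^+ (2 * N)) != 0]) ->
  forall I J : idx3 N,
    mul3 (mul3 (R12 tau z s true) (R13 tau (z * z') s false)) (R23 tau z' s true) I J
    = mul3 (mul3 (R23 tau z' s false) (R13 tau (z * z') s true)) (R12 tau z s false) I J.
Proof.
move=> _ _ generic_s spectral I J.
have spectral_q2 y : y \in [:: z; z'; z * z'] -> 1 - cexp tau ^+ 2 * y != 0 by case/spectral.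
by apply: dynamical_ybe_entry => //; apply: spectral_q2; rewrite !inE eqxx ?orbT.
Qed.
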